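(* Let $t\ge1$ be an integer, $N=\frac{t(t-1)}{2}$, let $(\theta_1,\dots,\theta_t)\in\mathbb{R}^t$, and let $p_1<p_2<\cdots<p_{N+1}$ be $N+1$ prime numbers; set $p_0:=1$. Then there is at least one $l\in\{1,\dots,N+1\}$ such that $$\min_{\substack{1\le i\le j\le t\\ k\in\mathbb{Z},\ p_l\nmid k}}\left|\,|\theta_i-\theta_j|-\frac{k}{p_l}\right|\ \ge\ \frac{1}{2p_{N}p_{N+1}}.$$ *)

From mathcomp Require Import all_boot all_order all_algebra.
From mathcomp Require Import reals.

From mathcomp Require Import all_boot all_order all_algebra.
From mathcomp Require Import reals boolp ring.
Import Order.TTheory GRing.Theory Num.Theory.
Local Open Scope ring_scope.

(* If every p_l failed, each l would give a
   pair i < j and an integer k, p_l not dividing k, with |theta_i - theta_j|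
   within eps of k / p_l (i = j is excluded since |k| / p_l >= 1 / p_l >= eps).
   Two fractions k / p_l and k' / p_m with p_l < p_m prime differ by at least
   1 / (p_l p_m) >= 2 eps, so distinct l give distinct pairs: impossible, as
   there are N + 1 indices l and only N = 'C(t, 2) pairs. *)

Lemma ler_dist_fractions (R : numFieldType) (a b : nat) (k k' : int) :
  (0 < a)%N -> (0 < b)%N -> coprime a b -> ~~ (a%:Z %| k)%Z ->
  1 / (a * b)%:R <= `|k%:~R / a%:R - k'%:~R / b%:R| :> R.
Proof.
move=> a_gt0 b_gt0 co_ab ndvd.
have ab_gt0 : 0 < (a * b)%:R :> R by rewrite ltr0n muln_gt0 a_gt0.
set z : int := k * b%:Z - k' * a%:Z.
have -> : k%:~R / a%:R - k'%:~R / b%:R = z%:~R / (a * b)%:R :> R.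
  rewrite /z intrB !intrM natrM !pmulrn; field.
  by rewrite !pnatr_eq0 -!lt0n a_gt0 b_gt0.
have z_neq0 : z != 0.
  apply: contra ndvd; rewrite subr_eq0 => /eqP kb_eq.
  have : (a%:Z %| k * b%:Z)%Z by rewrite kb_eq dvdz_mull.
  by rewrite Gauss_dvdzl // coprimezE !absz_nat.
rewrite normrM normfV (gtr0_norm ab_gt0) ler_pM2r ?invr_gt0 //.
by rewrite -intr_norm ler1z -gtz0_ge1 normr_gt0.
Qed.

Lemma dist_set2 [R : numDomainType] [T : finType] (x : T -> R) [i j i' j' : T] :
  i != j -> [set i; j] = [set i'; j'] -> `|x i - x j| = `|x i' - x j'|.
Proof.
move=> i_neq_j eq_ij.
have : i \in [set i'; j'] by rewrite -eq_ij set21.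
have : j \in [set i'; j'] by rewrite -eq_ij set22.
rewrite !inE => /orP[] /eqP ? /orP[] /eqP ?; subst; rewrite ?eqxx // in i_neq_j.
exact: distrC.
Qed.

Lemma leq_card_draws [I T : finType] [k : nat] (f : I -> {set T}) :
  injective f -> (forall x, #|f x| = k) -> (#|I| <= 'C(#|T|, k))%N.
Proof.
move=> f_inj card_f; rewrite -card_draws -(card_imset _ f_inj).
apply/subset_leq_card/subsetP => _ /imsetP[x _ ->].
by rewrite inE card_f.
Qed.

Section FarFromPrimeFractions.

Variables (R : realType) (t : nat) (theta : 'I_t -> R) (p : nat -> nat) (N : nat).
Hypothesis p0 : p 0%N = 1%N.
Hypothesis p_prime : forall l, (1 <= l <= N + 1)%N -> prime (p l).
Hypothesis p_incr : forall l, (1 <= l <= N)%N -> (p l < p l.+1)%N.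

Local Notation eps := (1 / (2 * (p N)%:R * (p (N + 1))%:R) : R).

Definition near_fraction (l : nat) (d : R) :=
  exists k : int, ~~ ((p l)%:Z %| k)%Z /\ `|d - k%:~R / (p l)%:R| < eps.

Lemma p_gt0 [l] : (l <= N + 1)%N -> (0 < p l)%N.
Proof. by case: l => [|l] l_le; rewrite ?p0 // prime_gt0 ?p_prime. Qed.

Lemma p_homo [l m] : (1 <= l)%N -> (l <= m)%N -> (m <= N + 1)%N -> (p l <= p m)%N.
Proof.
pose D := [pred n | 1 <= n <= N + 1]%N.
have D_conv : {in D &, forall i j n, i < n < j -> n \in D}%N.
  move=> i j; rewrite !inE => /andP[i_ge1 _] /andP[_ j_le] n /andP[lt_in lt_nj].
  by rewrite inE (leq_trans i_ge1 (ltnW lt_in)) (leq_trans (ltnW lt_nj) j_le).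
have p_step : {in D, forall i, i.+1 \in D -> p i <= p i.+1}%N.
  move=> i; rewrite !inE addn1 ltnS => /andP[i_ge1 _] /andP[_ i_le].
  by rewrite ltnW ?p_incr ?i_ge1.
move=> l_ge1 l_le_m m_le; apply: (homo_leq_in leqnn leq_trans D_conv p_step) (l_le_m).
  by rewrite inE l_ge1 (leq_trans l_le_m m_le).
by rewrite inE m_le (leq_trans l_ge1 l_le_m).
Qed.

Lemma pN_ge1 : (1 <= p N)%N.
Proof. exact/p_gt0/leq_addr. Qed.

Lemma eps_le_inv_p [l] : (1 <= l <= N + 1)%N -> eps <= 1 / (p l)%:R.
Proof.
move=> /andP[l_ge1 l_le]; rewrite !mul1r -!natrM.
rewrite lef_pV2 ?posrE ?ltr0n ?muln_gt0 ?pN_ge1 ?p_gt0 //; rewrite ler_nat.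
apply: leq_trans (p_homo l_ge1 l_le (leqnn _)) _.
by rewrite leq_pmull // muln_gt0 pN_ge1.
Qed.

Lemma eps_add_le_inv_pM [l m] : (1 <= l)%N -> (l < m <= N + 1)%N ->
  eps + eps <= 1 / (p l * p m)%:R.
Proof.
move=> l_ge1 /andP[l_lt_m m_le].
have l_le_N : (l <= N)%N by move: (leq_trans l_lt_m m_le); rewrite addn1 ltnS.
have -> : eps + eps = 1 / (p N * p (N + 1))%:R.
  rewrite natrM; field.
  by rewrite !pnatr_eq0 -!lt0n pN_ge1 p_gt0.
have pl_gt0 : (0 < p l)%N by rewrite p_gt0 // (leq_trans l_le_N) ?leq_addr.
rewrite !mul1r lef_pV2 ?posrE ?ltr0n ?muln_gt0 ?pN_ge1 ?pl_gt0 ?p_gt0 //.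
rewrite ler_nat leq_mul ?p_homo ?leq_addr //.
exact: leq_trans l_ge1 (ltnW l_lt_m).
Qed.

Lemma not_near_fraction0 [l] : (1 <= l <= N + 1)%N -> ~ near_fraction l 0.
Proof.
move=> l_range [k [ndvd near]].
have pl_gt0 : 0 < (p l)%:R :> R by rewrite ltr0n p_gt0 //; case/andP: l_range.
move: near; rewrite sub0r normrN normrM normfV (gtr0_norm pl_gt0) => near.
have : eps <= `|k%:~R| / (p l)%:R.
  apply: le_trans (eps_le_inv_p l_range) _; rewrite ler_pM2r ?invr_gt0 //.
  rewrite -intr_norm ler1z -gtz0_ge1 normr_gt0.
  by apply: contraNneq ndvd => ->; rewrite dvdz0.
by rewrite leNgt near.
Qed.

Lemma near_fraction_unique [l m d] : (1 <= l)%N -> (l < m <= N + 1)%N ->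
  near_fraction l d -> near_fraction m d -> False.
Proof.
move=> l_ge1 lm_range [k [ndvd near_l]] [k' [_ near_m]].
have /andP[l_lt_m m_le] := lm_range.
have l_le_N : (l <= N)%N by move: (leq_trans l_lt_m m_le); rewrite addn1 ltnS.
have pl_prime : prime (p l) by rewrite p_prime // l_ge1 (leq_trans l_le_N) ?leq_addr.
have pm_prime : prime (p m) by rewrite p_prime // m_le (leq_trans l_ge1) // ltnW.
have pl_lt_pm : (p l < p m)%N.
  have pl_lt_pl1 : (p l < p l.+1)%N by rewrite p_incr // l_ge1.
  exact: leq_trans pl_lt_pl1 (p_homo (ltn0Sn l) l_lt_m m_le).
have co_lm : coprime (p l) (p m).
  by rewrite prime_coprime // dvdn_prime2 // ltn_eqF.
have := @ler_dist_fractions R _ _ k k' (prime_gt0 pl_prime) (prime_gt0 pm_prime) co_lm ndvd.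
rewrite leNgt => /negP; apply.
apply: le_lt_trans (ler_distD d _ _) _; rewrite distrC.
exact: lt_le_trans (ltrD near_l near_m) (eps_add_le_inv_pM l_ge1 lm_range).
Qed.

Lemma exists_far_prime : ('C(t, 2) <= N)%N ->
  exists l, (1 <= l <= N + 1)%N /\
    forall (i j : 'I_t) (k : int), (i <= j)%N -> ~~ ((p l)%:Z %| k)%Z ->
      eps <= `| `|theta i - theta j| - k%:~R / (p l)%:R |.
Proof.
move=> few_pairs; apply: contrapT => /forallNP no_far.
have near_pair (l : 'I_(N + 1)) : exists ij : 'I_t * 'I_t,
    ij.1 != ij.2 /\ near_fraction l.+1 `|theta ij.1 - theta ij.2|.
  have l_range : (1 <= l.+1 <= N + 1)%N by rewrite ltn_ord.
  apply: contrapT => /forallNP no_pair; apply: (no_far l.+1); split=> // i j k _ ndvd.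
  rewrite leNgt; apply/negP => near.
  have [eq_ij|neq_ij] := eqVneq i j.
    rewrite eq_ij subrr normr0 in near.
    by apply: (not_near_fraction0 l_range); exists k.
  by apply: (no_pair (i, j)); split=> //; exists k.
have [f near_f] := choice near_pair.
have pair_inj : injective (fun l => [set (f l).1; (f l).2]).
  move=> l m eq_lm; have [neq_l near_l] := near_f l.
  have near_m : near_fraction m.+1 `|theta (f l).1 - theta (f l).2|.
    by rewrite (dist_set2 theta neq_l eq_lm); exact: (near_f m).2.
  case: (ltngtP l m) => [lt_lm|lt_ml|/val_inj //].
    by case: (near_fraction_unique _ _ near_l near_m); rewrite // ltnS lt_lm ltn_ord.
  by case: (near_fraction_unique _ _ near_m near_l); rewrite // ltnS lt_ml ltn_ord.
have card_pair l : #|[set (f l).1; (f l).2]| = 2%N by rewrite cards2 (near_f l).1.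
have := leq_card_draws _ pair_inj card_pair.
by rewrite !card_ord addn1 => /leq_trans/(_ few_pairs); rewrite ltnn.
Qed.

End FarFromPrimeFractions.

Theorem lemma4 (R : realType) (t : nat) (theta : 'I_t -> R) (p : nat -> nat) :
  (1 <= t)%N ->
  p 0%N = 1%N ->
  (forall l : nat, (1 <= l <= (t * (t - 1)) %/ 2 + 1)%N -> prime (p l)) ->
  (forall l : nat, (1 <= l <= (t * (t - 1)) %/ 2)%N -> (p l < p l.+1)%N) ->
  exists l : nat, (1 <= l <= (t * (t - 1)) %/ 2 + 1)%N /\
    forall (i j : 'I_t) (k : int), (i <= j)%N -> ~~ ((p l)%:Z %| k)%Z ->
      `| `|theta i - theta j| - k%:~R / (p l)%:R |
        >= 1 / (2 * (p ((t * (t - 1)) %/ 2)%N)%:R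
                  * (p ((t * (t - 1)) %/ 2 + 1)%N)%:R).
Proof.
move=> _ p0 p_prime p_incr; apply: exists_far_prime => //.
by rewrite bin2 subn1 divn2.
Qed.
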